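(* Let $(R,\mathfrak{m})$ be a finite local ring with residue field $\mathbb{F}_q$ and characteristic $p^N$. Consider a chain of subrings $R_{[\mathbb{F}_q]}=R_l\subseteq R_{l-1}\subseteq\cdots\subseteq R_1\subseteq R_0=R$. This chain is maximal (i.e. each $R_i$ is a maximal subring of $R_{i-1}$) if and only if $[R_{i-1}:R_i]=q$ for all $i=1,\dots,l$. Moreover, for such a maximal chain, $p^kR\subseteq R_k$ for every $k=0,1,\dots,l$.
   Context: All rings are commutative and unital. For a finite local ring $(R,\mathfrak{m})$ with residue field $\mathbb{F}_q$, $T(R)$ denotes the unique subgroup of $R^\times$ mapping isomorphically onto $\mathbb{F}_q^\times$ under reduction mod $\mathfrak{m}$ (Teichmuller units), and $R_{[\mathbb{F}_q]}$ denotes the $\mathbb{Z}/p^N\mathbb{Z}$-span of $T(R)$, which is the smallest subring of $R$ with residue field $\mathbb{F}_q$. Subrings of $R$ are local and their residue fields are naturally subfields of $\mathbb{F}_q$; indices are indices of additive groups. *)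

From HB Require Import structures.
From mathcomp Require Import all_boot all_order all_algebra.
Set Implicit Arguments. Unset Strict Implicit. Unset Printing Implicit Defensive.
Import GRing.Theory.
Local Open Scope ring_scope.

Section Defs.
Variable R : finComUnitRingType.

Definition is_ideal (I : {set R}) : Prop :=
  [/\ 0 \in I,
      (forall x y, x \in I -> y \in I -> x - y \in I) &
      (forall r x, x \in I -> r * x \in I)].

Definition is_proper_ideal (I : {set R}) : Prop := is_ideal I /\ 1 \notin I.

Definition is_maximal_ideal (I : {set R}) : Prop :=
  is_proper_ideal I /\
  (forall J : {set R}, is_proper_ideal J -> I \subset J -> J = I).

Definition local_ring_with (m : {set R}) : Prop :=
  is_maximal_ideal m /\ (forall I, is_maximal_ideal I -> I = m).

Definition residue_card (m : {set R}) : nat := (#|[set: R]| %/ #|m|)%N.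

Definition char_eq (n : nat) : Prop :=
  [/\ (0 < n)%N, (n%:R : R) = 0 & forall k, (0 < k < n)%N -> (k%:R : R) != 0].

Definition is_subring (S : {set R}) : Prop :=
  [/\ 1 \in S,
      (forall x y, x \in S -> y \in S -> x - y \in S) &
      (forall x y, x \in S -> y \in S -> x * y \in S)].

Definition maximal_subring (S S' : {set R}) : Prop :=
  [/\ is_subring S, is_subring S', S \proper S' &
      forall T : {set R}, is_subring T -> S \subset T -> T \subset S' ->
        T = S \/ T = S'].

(* T is a subgroup of R^x mapping isomorphically onto (R/m)^x under
   reduction mod m (boolean, finite quantifiers) *)
Definition is_teichmuller (m T : {set R}) : bool :=
  [&& [forall x in T, x \is a GRing.unit],
      1 \in T,
      [forall x in T, forall y in T, x * y \in T],
      [forall x in T, x^-1 \in T],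
      [forall x in T, forall y in T, (x - y \in m) ==> (x == y)] &
      [forall u, (u \notin m) ==> [exists t in T, u - t \in m]]].

(* T(R): the (unique) Teichmuller subgroup *)
Definition teich (m : {set R}) : {set R} :=
  odflt set0 [pick T : {set R} | is_teichmuller m T].

(* additive subgroups and the Z-span (= Z/p^N-span) of a set *)
Definition is_addgroup (S : {set R}) : bool :=
  (0 \in S) && [forall x in S, forall y in S, x - y \in S].

Definition zspan (A : {set R}) : {set R} :=
  [set x | [forall S : {set R}, (is_addgroup S && (A \subset S)) ==> (x \in S)]].

Definition R_Fq (m : {set R}) : {set R} := zspan (teich m).

Definition mulnset (n : nat) : {set R} := [set (n%:R : R) * x | x in [set: R]].

End Defs.

From HB Require Import structures.
From mathcomp Require Import all_boot all_order all_algebra.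
From mathcomp Require Import zify ring.
From Stdlib Require Import Classical.
Set Implicit Arguments. Unset Strict Implicit.
Import GRing.Theory.
Local Open Scope ring_scope.

(* Let T be the Teichmuller set and D = T u {0}, a set of representatives of
   R/m any two of which differ by a unit.  If S is a proper subring of S'
   containing T, a descent along the principal ideals yields y in S' n m,
   y not in S, with y (S' n m) in S; then S + D y is a subring of S' strictly
   containing S, of cardinality q |S|, and (S n m) (S + D y) lies in S.
   Hence a maximal step has index q, while a step of index q admits no
   intermediate subring (it would force index at least q^2).  Finally in a
   maximal step R_(k+1) of R_k we get p R_k in R_(k+1), since p is a
   nilpotent element of R_(k+1) and hence lies in m. *)

Section Subring.
Variables (R : finComUnitRingType) (S : {set R}).
Hypothesis HS : is_subring S.

Lemma subring1 : 1 \in S. Proof. by case: HS. Qed.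

Lemma subringB x y : x \in S -> y \in S -> x - y \in S.
Proof. by case: HS => _ + _; apply. Qed.

Lemma subringM x y : x \in S -> y \in S -> x * y \in S.
Proof. by case: HS => _ _; apply. Qed.

Lemma subring0 : 0 \in S. Proof. by rewrite -(subrr 1) subringB // subring1. Qed.

Lemma subringD x y : x \in S -> y \in S -> x + y \in S.
Proof. by move=> xS yS; rewrite -(opprK y) subringB // -sub0r subringB // subring0. Qed.

Lemma subring_nat n : n%:R \in S.
Proof. by elim: n => [|n IHn]; rewrite ?subring0 // -addn1 natrD subringD ?subring1. Qed.

(* Multiplication by a unit u of S is injective on the finite set S, hence
   onto, so 1 = u s for some s in S. *)
Lemma subringV u : u \in S -> u \is a GRing.unit -> u^-1 \in S.
Proof.
move=> uS uU; have uS_sub : [set u * s | s in S] \subset S.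
  by apply/subsetP => _ /imsetP[s sS ->]; rewrite subringM.
have uSE : [set u * s | s in S] = S.
  apply/eqP; rewrite eqEcard uS_sub card_in_imset ?leqnn //.
  by move=> a b _ _; apply: mulrI.
have /imsetP[s sS us1] : 1 \in [set u * s | s in S] by rewrite uSE subring1.
by rewrite -[u^-1]mulr1 us1 mulKr.
Qed.

Lemma card_subring_gt0 : (0 < #|S|)%N.
Proof. by apply/card_gt0P; exists 1; apply: subring1. Qed.

End Subring.

Section Ideal.
Variables (R : finComUnitRingType) (I : {set R}).
Hypothesis HI : is_ideal I.

Lemma ideal0 : 0 \in I. Proof. by case: HI. Qed.

Lemma idealB x y : x \in I -> y \in I -> x - y \in I.
Proof. by case: HI => _ + _; apply. Qed.

Lemma idealMl x y : y \in I -> x * y \in I.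
Proof. by case: HI => _ _; apply. Qed.

Lemma idealMr x y : x \in I -> x * y \in I.
Proof. by rewrite mulrC; apply: idealMl. Qed.

Lemma idealD x y : x \in I -> y \in I -> x + y \in I.
Proof. by move=> xI yI; rewrite -(opprK y) idealB // -sub0r idealB // ideal0. Qed.

End Ideal.

Section PrincipalIdeal.
Variable R : finComUnitRingType.
Implicit Types (I : {set R}) (x y z : R).

Lemma proper_ideal_sub_maximal I :
  is_proper_ideal I -> exists2 J, is_maximal_ideal J & I \subset J.
Proof.
have [n] := ubnP #|~: I|; elim: n I => // n IHn I ltIn HI.
have [[J [HJ ltIJ]] | noJ] :=
  classic (exists J, is_proper_ideal J /\ I \proper J).
  have [|K HK ltJK] := IHn J _ HJ; last first.
    by exists K => //; apply: subset_trans (proper_sub ltIJ) ltJK.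
  have ltJI : (#|~: J| < #|~: I|)%N by rewrite proper_card // properC.
  by apply: leq_trans ltJI _; rewrite -ltnS.
exists I => //; split => // J HJ sIJ; apply/eqP; apply: contraT => neJI.
by case: noJ; exists J; rewrite properEneq eq_sym neJI.
Qed.

Definition principal x : {set R} := [set x * r | r in [set: R]].

Lemma mem_principal x : x \in principal x.
Proof. by apply/imsetP; exists 1; rewrite ?mulr1. Qed.

Lemma principal_mulr x y : principal (x * y) \subset principal x.
Proof.
by apply/subsetP => _ /imsetP[r _ ->]; apply/imsetP; exists (y * r); rewrite ?mulrA.
Qed.

Lemma principal_proper_ideal x :
  x \isn't a GRing.unit -> is_proper_ideal (principal x).
Proof.
move=> xNU; split; first split.
- by apply/imsetP; exists 0; rewrite ?mulr0.
- move=> _ _ /imsetP[r _ ->] /imsetP[s _ ->].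
  by apply/imsetP; exists (r - s); rewrite ?mulrBr.
- move=> r _ /imsetP[s _ ->]; apply/imsetP; exists (r * s) => //; exact: mulrCA.
apply: contra xNU => /imsetP[r _ xr1]; apply/unitrPr; by exists r.
Qed.

End PrincipalIdeal.

Section LocalRing.
Variables (R : finComUnitRingType) (m : {set R}).
Hypothesis Hm : local_ring_with m.

Lemma max_ideal : is_ideal m. Proof. by case: Hm => [[[]]]. Qed.

Lemma one_notin_max : 1 \notin m. Proof. by case: Hm => [[[]]]. Qed.

Lemma notin_max_unit x : x \notin m -> x \is a GRing.unit.
Proof.
apply: contraR => xNU.
have [J HJ sxJ] := proper_ideal_sub_maximal (principal_proper_ideal xNU).
by case: Hm => _ /(_ J HJ) <-; apply: (subsetP sxJ); apply: mem_principal.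
Qed.

Lemma unit_notin_max x : x \is a GRing.unit -> x \notin m.
Proof.
by move=> xU; apply: contra one_notin_max => xm; rewrite -(mulVr xU) (idealMl max_ideal).
Qed.

Lemma nilpotent_in_max x n : x ^+ n = 0 -> x \in m.
Proof.
move=> xn0; apply: contraT => /notin_max_unit /(unitrX n).
by rewrite xn0 unitr0.
Qed.

Lemma principal_mul_max_proper x z :
  z \in m -> x != 0 -> principal (x * z) \proper principal x.
Proof.
move=> zm x0; apply/properP; split; first exact: principal_mulr.
exists x; first exact: mem_principal.
apply/imsetP => -[r _ xzr]; case/eqP: x0.
have zrU : 1 - z * r \is a GRing.unit.
  apply: notin_max_unit; apply: contra one_notin_max => zr1.
  by rewrite -(subrK (z * r) 1) (idealD max_ideal) // (idealMr max_ideal).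
by apply: (mulIr zrU); rewrite mul0r mulrBr mulr1 mulrA -xzr subrr.
Qed.

(* The principal ideal of w shrinks strictly whenever w is multiplied by an
   element of m, so replacing w by some w z not in S must terminate. *)
Lemma exists_absorbing_max_elt (S S' : {set R}) w :
  is_subring S -> is_subring S' -> w \in S' -> w \in m -> w \notin S ->
  exists y, [/\ y \in S', y \in m, y \notin S & {in S' :&: m, forall z, y * z \in S}].
Proof.
move=> HS HS'; have [n] := ubnP #|principal w|.
elim: n w => // n IHn w ltwn wS' wm wNS.
have [/forall_inP yS|/forall_inPn[z /setIP[zS' zm] wzNS]] :=
  boolP [forall z in S' :&: m, w * z \in S]; first by exists w.
apply: (IHn (w * z)) (subringM HS' wS' zS') (idealMr max_ideal _ wm) wzNS.
have w0 : w != 0 by apply: contraNneq wNS => ->; apply: subring0.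
by apply: leq_trans (proper_card (principal_mul_max_proper zm w0)) _; rewrite -ltnS.
Qed.

End LocalRing.

Section Teichmuller.
Variables (R : finComUnitRingType) (m T : {set R}).
Hypotheses (Hm : local_ring_with m) (HT : is_teichmuller m T).

Local Notation D := ((0 : R) |: T).

Lemma teich_unit t : t \in T -> t \is a GRing.unit.
Proof. by move=> tT; case/andP: HT => /forall_inP/(_ t tT). Qed.

Lemma teich1 : 1 \in T. Proof. by case/and3P: HT. Qed.

Lemma digit_cover x : exists2 d, d \in D & x - d \in m.
Proof.
have [xm|xNm] := boolP (x \in m); first by exists 0; rewrite ?setU11 ?subr0.
case/and5P: HT => _ _ _ _ /andP[_ /forallP /(_ x) /implyP /(_ xNm) /exists_inP].
by case=> t tT xtm; exists t; rewrite ?setU1r.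
Qed.

Lemma digit_inj d1 d2 : d1 \in D -> d2 \in D -> d1 - d2 \in m -> d1 = d2.
Proof.
have tNm t : t \in T -> t \notin m by move/teich_unit/(unit_notin_max Hm).
case/setU1P=> [->|d1T] /setU1P[->|d2T] // d12m.
- case/negP: (tNm _ d2T).
  by rewrite -(subKr 0 d2) (idealB (max_ideal Hm)) // (ideal0 (max_ideal Hm)).
- by case/negP: (tNm _ d1T); rewrite -[d1]subr0.
case/and5P: HT => _ _ _ _ /andP[/forall_inP /(_ d1 d1T) /forall_inP /(_ d2 d2T)].
by move/implyP/(_ d12m)/eqP.
Qed.

Lemma digit_sub_unit d1 d2 :
  d1 \in D -> d2 \in D -> d1 != d2 -> d1 - d2 \is a GRing.unit.
Proof.
move=> d1D d2D; apply: contraNT => d12NU; apply/eqP/(digit_inj d1D d2D).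
by apply: contraR d12NU; apply: notin_max_unit.
Qed.

Lemma card_digits_gt1 : (1 < #|D|)%N.
Proof.
have T0 : (0 : R) \notin T by apply/negP => /teich_unit; rewrite unitr0.
by rewrite cardsU1 T0 add1n ltnS; apply/card_gt0P; exists 1; apply: teich1.
Qed.

Lemma residue_cardE : residue_card m = #|D|.
Proof.
have m_gt0 : (0 < #|m|)%N by apply/card_gt0P; exists 0; apply: ideal0 (max_ideal Hm).
rewrite /residue_card -(mulnK #|D| m_gt0) -cardsX; congr (_ %/ _)%N.
have -> : [set: R] = [set u.1 + u.2 | u in setX D m].
  apply/setP => x; rewrite in_setT; symmetry; apply/imsetP.
  have [d dD xdm] := digit_cover x.
  by exists (d, x - d); rewrite ?in_setX ?dD //= addrC subrK.
rewrite card_in_imset // => -[d1 a1] [d2 a2] /setXP[/= d1D a1m] /setXP[/= d2D a2m] E.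
have d12 : d1 = d2.
  apply: digit_inj; rewrite // (_ : d1 - d2 = a2 - a1) ?(idealB (max_ideal Hm)) //.
  by rewrite -[d1](addrK a1) E; ring.
by move: E; rewrite d12 => /addrI ->.
Qed.

Section DigitExtension.
Variables (S S' : {set R}) (y : R).
Hypotheses (HS : is_subring S) (HS' : is_subring S') (sSS' : S \subset S').
Hypotheses (sTS : T \subset S) (yS' : y \in S') (ym : y \in m) (yNS : y \notin S).
Hypothesis yS'm : {in S' :&: m, forall z, y * z \in S}.

Definition digit_ext : {set R} := [set u.1 + u.2 * y | u in setX S D].

Lemma digitsS : D \subset S.
Proof. by rewrite subUset sub1set subring0. Qed.

Lemma mem_digit_ext s1 s2 : s1 \in S -> s2 \in S -> s1 + s2 * y \in digit_ext.
Proof.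
move=> s1S s2S; have [d dD s2dm] := digit_cover s2.
have dS := subsetP digitsS d dD.
apply/imsetP; exists (s1 + y * (s2 - d), d); last by rewrite /=; ring.
rewrite in_setX dD andbT (subringD HS) ?yS'm //.
by rewrite inE s2dm andbT (subringB HS') ?(subsetP sSS').
Qed.

Lemma digit_extP x :
  reflect (exists s1 s2, [/\ s1 \in S, s2 \in S & x = s1 + s2 * y]) (x \in digit_ext).
Proof.
apply: (iffP idP) => [/imsetP[[s d] /setXP[sS dD] ->]|[s1 [s2 [s1S s2S ->]]]].
  by exists s, d; split; rewrite // (subsetP digitsS).
exact: mem_digit_ext.
Qed.

Lemma digit_ext_subring : is_subring digit_ext.
Proof.
have yy : y * y \in S by rewrite yS'm // inE yS' ym.
have sD := subringD HS; have sB := subringB HS; have sM := subringM HS.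
split.
- by rewrite -[1]addr0 -(mul0r y) mem_digit_ext ?(subring1 HS) ?(subring0 HS).
- move=> _ _ /digit_extP[s1 [s2 [s1S s2S ->]]] /digit_extP[t1 [t2 [t1S t2S ->]]].
  rewrite (_ : _ - _ = (s1 - t1) + (s2 - t2) * y); last by ring.
  exact: mem_digit_ext (sB _ _ s1S t1S) (sB _ _ s2S t2S).
- move=> _ _ /digit_extP[s1 [s2 [s1S s2S ->]]] /digit_extP[t1 [t2 [t1S t2S ->]]].
  rewrite (_ : _ * _ = (s1 * t1 + s2 * t2 * (y * y)) + (s1 * t2 + s2 * t1) * y);
    last by ring.
  exact: mem_digit_ext (sD _ _ (sM _ _ s1S t1S) (sM _ _ (sM _ _ s2S t2S) yy))
                       (sD _ _ (sM _ _ s1S t2S) (sM _ _ s2S t1S)).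
Qed.

Lemma digit_ext_proper : S \proper digit_ext.
Proof.
apply/properP; split.
  by apply/subsetP => s sS; rewrite -[s]addr0 -(mul0r y) mem_digit_ext ?(subring0 HS).
exists y => //.
by rewrite -[y]add0r -{1}(mul1r y) mem_digit_ext ?(subring0 HS) ?(subring1 HS).
Qed.

Lemma digit_ext_sub : digit_ext \subset S'.
Proof.
apply/subsetP => _ /digit_extP[s1 [s2 [s1S s2S ->]]].
apply: (subringD HS'); last apply: (subringM HS') yS'; exact: (subsetP sSS').
Qed.

Lemma card_digit_ext : #|digit_ext| = (#|D| * #|S|)%N.
Proof.
rewrite card_in_imset ?cardsX 1?mulnC // => -[s1 d1] [s2 d2].
move=> /setXP[/= s1S d1D] /setXP[/= s2S d2D] E.
have d12 : d1 = d2.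
  apply: contraTeq yNS => /(digit_sub_unit d1D d2D) d12U.
  have -> : y = (d1 - d2)^-1 * (s2 - s1).
    by apply: (mulrI d12U); rewrite mulVKr // -[s2](addrK (d2 * y)) -E; ring.
  rewrite negbK; apply: (subringM HS); last exact: (subringB HS).
  by apply: (subringV HS) d12U; apply: (subringB HS); apply: (subsetP digitsS).
by move: E; rewrite d12 => /addIr ->.
Qed.

Lemma digit_ext_absorb : {in S :&: m & digit_ext, forall z x, z * x \in S}.
Proof.
move=> z _ /setIP[zS zm] /digit_extP[s1 [s2 [s1S s2S ->]]].
rewrite mulrDr mulrCA (mulrC z y); apply: (subringD HS); first exact: (subringM HS).
by apply: (subringM HS s2S); apply: yS'm; rewrite inE zm (subsetP sSS').
Qed.

End DigitExtension.

Lemma exists_digit_ext (S S' : {set R}) :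
  is_subring S -> is_subring S' -> T \subset S -> S \proper S' ->
  exists E, [/\ is_subring E, S \proper E, E \subset S',
                #|E| = (#|D| * #|S|)%N & {in S :&: m & E, forall z x, z * x \in S}].
Proof.
move=> HS HS' sTS /properP[sSS' [x xS' xNS]].
have [d dD xdm] := digit_cover x.
have dS : d \in S by apply: (subsetP (digitsS HS sTS)).
have xdS' : x - d \in S' by apply: (subringB HS') => //; apply: (subsetP sSS').
have xdNS : x - d \notin S.
  by apply: contra xNS => xdS; rewrite -(subrK d x); apply: (subringD HS).
have [y [yS' ym yNS yS'm]] := exists_absorbing_max_elt Hm HS HS' xdS' xdm xdNS.
exists (digit_ext S y); split.
- exact: digit_ext_subring HS HS' sSS' sTS yS' ym yS'm.
- exact: digit_ext_proper HS HS' sSS' sTS yNS yS'm.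
- exact: digit_ext_sub HS HS' sSS' sTS yS' yS'm.
- exact: card_digit_ext HS sTS yNS.
- exact: digit_ext_absorb HS HS' sSS' sTS yS'm.
Qed.

Lemma proper_subring_card (S S' : {set R}) :
  is_subring S -> is_subring S' -> T \subset S -> S \proper S' ->
  (#|D| * #|S| <= #|S'|)%N.
Proof.
move=> HS HS' sTS ltSS'.
have [E [_ _ sES' <- _]] := exists_digit_ext HS HS' sTS ltSS'.
exact: subset_leq_card.
Qed.

Lemma maximal_subring_card_absorb (S S' : {set R}) :
  maximal_subring S S' -> T \subset S ->
  #|S'| = (#|D| * #|S|)%N /\ {in S :&: m & S', forall z x, z * x \in S}.
Proof.
case=> HS HS' ltSS' maxS sTS.
have [E [HE ltSE sES' cardE absorbE]] := exists_digit_ext HS HS' sTS ltSS'.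
have [ES|<-] := maxS E HE (proper_sub ltSE) sES'; last by split.
by move: ltSE; rewrite ES properxx.
Qed.

(* An intermediate subring U would give |S'| >= q |U| >= q^2 |S|, whereas
   |S'| < (q + 1) |S| by the division algorithm. *)
Lemma index_maximal_subring (S S' : {set R}) :
  is_subring S -> is_subring S' -> S \subset S' -> T \subset S ->
  (#|S'| %/ #|S|)%N = #|D| -> maximal_subring S S'.
Proof.
move=> HS HS' sSS' sTS idx.
have S_gt0 := card_subring_gt0 HS; have q_gt1 := card_digits_gt1.
have ltSS' : S \proper S'.
  rewrite properEneq sSS' andbT; apply/eqP => eqSS'.
  by move: q_gt1; rewrite -idx -eqSS' divnn S_gt0.
split => // U HU sSU sUS'.
have [-> | neUS] := eqVneq U S; first by left.
have [-> | neUS'] := eqVneq U S'; first by right.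
have ltSU : S \proper U by rewrite properEneq eq_sym neUS sSU.
have ltUS' : U \proper S' by rewrite properEneq neUS' sUS'.
have := proper_subring_card HS HU sTS ltSU.
have := proper_subring_card HU HS' (subset_trans sTS sSU) ltUS'.
have := ltn_pmod #|S'| S_gt0; have := divn_eq #|S'| #|S|; rewrite idx.
move: #|S| #|U| #|S'| #|D| (#|S'| %% #|S|)%N q_gt1 => a b c q r *; nia.
Qed.

End Teichmuller.

Lemma subset_chain (T : finType) (A : nat -> {set T}) (l : nat) :
  (forall i, (0 < i <= l)%N -> A i \subset A i.-1) ->
  forall i j, (i <= j <= l)%N -> A j \subset A i.
Proof.
move=> decA i; elim=> [|j IHj] /andP[le_ij le_jl].
  by move: le_ij; rewrite leqn0 => /eqP->.
move: le_ij; rewrite leq_eqVlt ltnS => /orP[/eqP-> // | le_ij].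
by apply: subset_trans (decA j.+1 _) (IHj _); rewrite ?le_ij ?(ltnW le_jl).
Qed.

Section TeichmullerSpan.
Variables (R : finComUnitRingType) (m : {set R}).

Lemma sub_zspan (A : {set R}) : A \subset zspan A.
Proof.
apply/subsetP => a aA; rewrite inE; apply/forallP => S.
by apply/implyP => /andP[_ /subsetP]; apply.
Qed.

(* Without a Teichmuller set, teich m is empty and its span is {0}. *)
Lemma R_Fq_teich : 1 \in R_Fq m -> is_teichmuller m (teich m).
Proof.
rewrite /R_Fq /teich; case: pickP => [T -> // | _ /=].
have zero_group : is_addgroup [set 0 : R] && (set0 \subset [set 0 : R]).
  rewrite sub0set andbT /is_addgroup set11 /=.
  by apply/forall_inP => x /set1P ->; apply/forall_inP => y /set1P ->; rewrite subrr set11.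
by rewrite inE => /forallP /(_ [set 0]); rewrite zero_group /= inE oner_eq0.
Qed.

End TeichmullerSpan.

Theorem proposition34 (R : finComUnitRingType) (m : {set R}) (p N : nat)
    (l : nat) (Rs : nat -> {set R}) :
  local_ring_with m -> prime p -> char_eq R (p ^ N)%N ->
  Rs 0%N = [set: R] -> Rs l = R_Fq m ->
  (forall i, (i <= l)%N -> is_subring (Rs i)) ->
  (forall i, (0 < i <= l)%N -> Rs i \subset Rs i.-1) ->
  ((forall i, (0 < i <= l)%N -> maximal_subring (Rs i) (Rs i.-1)) <->
   (forall i, (0 < i <= l)%N -> (#|Rs i.-1| %/ #|Rs i|)%N = residue_card m))
  /\
  ((forall i, (0 < i <= l)%N -> maximal_subring (Rs i) (Rs i.-1)) ->
   forall k, (k <= l)%N -> mulnset R (p ^ k)%N \subset Rs k).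
Proof.
move=> Hm _ charR R0 Rl Rsub Rdec.
have HT : is_teichmuller m (teich m).
  by apply: R_Fq_teich; rewrite -Rl; apply/subring1/Rsub.
have sTR i : (0 < i <= l)%N -> teich m \subset Rs i.
  case/andP=> _ le_il; apply: subset_trans (sub_zspan _) _.
  by rewrite -/(R_Fq m) -Rl; apply: subset_chain Rdec _ _ _; rewrite le_il leqnn.
have RsS i : (0 < i <= l)%N -> is_subring (Rs i) by case/andP => _; apply: Rsub.
have RsS1 i : (0 < i <= l)%N -> is_subring (Rs i.-1).
  by case/andP => _ /(leq_trans (leq_pred i)); apply: Rsub.
have p_max : p%:R \in m.
  by apply: (nilpotent_in_max Hm (n := N)); rewrite -natrX; case: charR.
split; first split.
- move=> maxR i il; rewrite (residue_cardE Hm HT).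
  rewrite (maximal_subring_card_absorb Hm HT (maxR i il) (sTR i il)).1.
  by rewrite mulnK // (card_subring_gt0 (RsS i il)).
- move=> idx i il; apply: (index_maximal_subring Hm HT (RsS _ il) (RsS1 _ il)).
  + exact: Rdec.
  + exact: sTR.
  + by rewrite -(residue_cardE Hm HT) idx.
- move=> maxR; elim=> [|k IHk] lt_kl; first by rewrite R0 subsetT.
  have kl : (0 < k.+1 <= l)%N by [].
  have [_ absorb] := maximal_subring_card_absorb Hm HT (maxR _ kl) (sTR _ kl).
  apply/subsetP => _ /imsetP[x _ ->]; rewrite expnS natrM -mulrA.
  apply: absorb; first by rewrite inE p_max (subring_nat (RsS _ kl)).
  by apply: (subsetP (IHk (ltnW lt_kl))); apply/imsetP; exists x.
Qed.
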